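(* Let $(X,S,\beta)$ be a virtual pair, $H$ a group, and let $(f,g)$ be a noncommutative 2-cocycle pair $X\times X\to H$. If $(\tilde f,g)$ is cohomologous to $(f,g)$, then $(\tilde f,g)$ is also a noncommutative 2-cocycle pair.
   Context: For a bijection $\sigma\colon X\times X\to X\times X$ write $\sigma(x,y)=(\sigma^1(x,y),\sigma^2(x,y))$. A biquandle is a bijection $\sigma$ satisfying $(\mathrm{id}\times\sigma)(\sigma\times\mathrm{id})(\mathrm{id}\times\sigma)=(\sigma\times\mathrm{id})(\mathrm{id}\times\sigma)(\sigma\times\mathrm{id})$, such that for all $x,z$ there is a unique $y$ with $\sigma^1(x,y)=z$, for all $y,t$ there is a unique $x$ with $\sigma^2(x,y)=t$, and there is a bijection $s_\sigma$ with $\{(x,y):\sigma(x,y)=(x,y)\}=\{(x,s_\sigma(x))\}$. A virtual pair $(X,S,\beta)$: biquandles $(X,S),(X,\beta)$ with $\beta^2=\mathrm{id}$ and $(\mathrm{id}\times\beta)(S\times\mathrm{id})(\mathrm{id}\times\beta)=(\beta\times\mathrm{id})(\mathrm{id}\times S)(\beta\times\mathrm{id})$; write $s=s_S$ (also $s_S$) and $s_\beta$. A noncommutative 2-cocycle pair is a pair $f,g\colon X\times X\to H$ such that for all $x,y,z\in X$: (f1) $f(x,y)f(S^2(x,y),z)=f(x,S^1(y,z))f(S^2(x,S^1(y,z)),S^2(y,z))$; (f2) $f(S^1(x,y),S^1(S^2(x,y),z))=f(y,z)$; (f3) $f(x,s(x))=1$; (g1) $g(x,s_\beta(x))=1$;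 (g2) $g(x,y)g(\beta(x,y))=1$; (g3) $g(x,y)g(\beta^2(x,y),z)=g(x,\beta^1(y,z))g(\beta^2(x,\beta^1(y,z)),\beta^2(y,z))$; (g4) $g(y,z)g(\beta^2(x,\beta^1(y,z)),\beta^2(y,z))=g(x,y)g(\beta^1(x,y),\beta^1(\beta^2(x,y),z))$; (g5) $g(y,z)g(x,\beta^1(y,z))=g(\beta^2(x,y),z)g(\beta^1(x,y),\beta^1(\beta^2(x,y),z))$; (m1) $g(y,z)=g(S^1(x,y),\beta^1(S^2(x,y),z))$; (m2) $g(y,z)g(x,\beta^1(y,z))=g(S^2(x,y),z)g(S^1(x,y),\beta^1(S^2(x,y),z))$; (m3) $g(x,\beta^1(y,z))f(\beta^2(x,\beta^1(y,z)),\beta^2(y,z))=f(x,y)g(S^2(x,y),z)$. Two pairs $(f,g)$ and $(\tilde f,\tilde g)$ of maps $X\times X\to H$ are cohomologous if $g=\tilde g$ and there is a map $\lambda\colon X\to H$ with $\tilde f(x,y)=\lambda(x)f(x,y)\lambda(S^2(x,y))^{-1}$ for all $x,y$, where $\lambda$ satisfies, for all $x,y\in X$: $\lambda(x)=\lambda(s_S(x))$, $\lambda(y)=\lambda(S^1(x,y))$, $\lambda(y)=\lambda(\beta^1(x,y))$, and $\lambda(x)$ commutes with $g(x,y)$. *)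

Set Implicit Arguments.

Record Group := {
  gcar :> Type;
  gmul : gcar -> gcar -> gcar;
  gone : gcar;
  ginv : gcar -> gcar;
  gmulA : forall a b c, gmul a (gmul b c) = gmul (gmul a b) c;
  gmul1l : forall a, gmul gone a = a;
  gmulVl : forall a, gmul (ginv a) a = gone
}.

Section Defs.
Variable X : Type.

Definition is_bijection {A B : Type} (h : A -> B) : Prop :=
  exists k : B -> A, (forall a, k (h a) = a) /\ (forall b, h (k b) = b).

Definition c1 (sigma : X * X -> X * X) (x y : X) : X := fst (sigma (x, y)).
Definition c2 (sigma : X * X -> X * X) (x y : X) : X := snd (sigma (x, y)).

Definition left_act (sigma : X * X -> X * X) (t : X * X * X) : X * X * X :=
  let '(x, y, z) := t in let '(a, b) := sigma (x, y) in (a, b, z).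
Definition right_act (sigma : X * X -> X * X) (t : X * X * X) : X * X * X :=
  let '(x, y, z) := t in let '(b, c) := sigma (y, z) in (x, b, c).

Definition is_s_map (sigma : X * X -> X * X) (s : X -> X) : Prop :=
  is_bijection s /\ (forall x y, sigma (x, y) = (x, y) <-> y = s x).

Definition is_biquandle (sigma : X * X -> X * X) : Prop :=
  is_bijection sigma /\
  (forall t, right_act sigma (left_act sigma (right_act sigma t))
             = left_act sigma (right_act sigma (left_act sigma t))) /\
  (forall x z, exists y, c1 sigma x y = z /\ forall y', c1 sigma x y' = z -> y' = y) /\
  (forall y t, exists x, c2 sigma x y = t /\ forall x', c2 sigma x' y = t -> x' = x) /\
  (exists s, is_s_map sigma s).

Definition is_virtual_pair (S beta : X * X -> X * X) : Prop :=
  is_biquandle S /\ is_biquandle beta /\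
  (forall p, beta (beta p) = p) /\
  (forall t, right_act beta (left_act S (right_act beta t))
             = left_act beta (right_act S (left_act beta t))).

Variable H : Group.
Local Notation "a * b" := (gmul H a b).
Local Notation one := (gone H).

(* s = s_S and sb = s_beta are passed explicitly (they are uniquely determined). *)
Definition is_nc_cocycle_pair (S beta : X * X -> X * X) (s sb : X -> X)
    (f g : X -> X -> H) : Prop :=
  let S1 := c1 S in let S2 := c2 S in let b1 := c1 beta in let b2 := c2 beta in
  (forall x y z, f x y * f (S2 x y) z = f x (S1 y z) * f (S2 x (S1 y z)) (S2 y z)) /\
  (forall x y z, f (S1 x y) (S1 (S2 x y) z) = f y z) /\
  (forall x, f x (s x) = one) /\
  (forall x, g x (sb x) = one) /\
  (forall x y, g x y * g (b1 x y) (b2 x y) = one) /\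
  (forall x y z, g x y * g (b2 x y) z = g x (b1 y z) * g (b2 x (b1 y z)) (b2 y z)) /\
  (forall x y z, g y z * g (b2 x (b1 y z)) (b2 y z) = g x y * g (b1 x y) (b1 (b2 x y) z)) /\
  (forall x y z, g y z * g x (b1 y z) = g (b2 x y) z * g (b1 x y) (b1 (b2 x y) z)) /\
  (forall x y z, g y z = g (S1 x y) (b1 (S2 x y) z)) /\
  (forall x y z, g y z * g x (b1 y z) = g (S2 x y) z * g (S1 x y) (b1 (S2 x y) z)) /\
  (forall x y z, g x (b1 y z) * f (b2 x (b1 y z)) (b2 y z) = f x y * g (S2 x y) z).

Definition cohomologous (S beta : X * X -> X * X) (s : X -> X)
    (f g ft gt : X -> X -> H) : Prop :=
  g = gt /\
  exists lam : X -> H,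
    (forall x, lam x = lam (s x)) /\
    (forall x y, lam y = lam (c1 S x y)) /\
    (forall x y, lam y = lam (c1 beta x y)) /\
    (forall x y, lam x * g x y = g x y * lam x) /\
    (forall x y, ft x y = lam x * f x y * ginv H (lam (c2 S x y))).

End Defs.

Arguments is_nc_cocycle_pair {X H}.
Arguments cohomologous {X H}.

(* In each condition on [ft] the inner factors [lam^-1 lam] telescope away, and the
   outer ones agree because the braid relations (Yang-Baxter, and its mixed version
   with [beta]) identify the relevant second components up to moves that do not change
   [lam]: it is invariant under [S^1], [beta^1] and [s], hence, [beta] being an
   involution, under [beta^2], and it commutes with every value of [g]. *)
From Stdlib Require Import Setoid.

Set Implicit Arguments.
Unset Strict Implicit.

Section GroupFacts.
Variable H : Group.
Local Notation "a * b" := (gmul H a b).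
Local Notation "a ^-1" := (ginv H a) (at level 3, format "a ^-1").

Lemma gmulVr (a : H) : a * a^-1 = gone H.
Proof.
  assert (idem : (a * a^-1) * (a * a^-1) = a * a^-1).
  { rewrite <- gmulA, (gmulA _ a^-1 a), gmulVl, gmul1l. reflexivity. }
  rewrite <- (gmul1l H (a * a^-1)), <- (gmulVl H (a * a^-1)) at 1.
  rewrite <- gmulA, idem. apply gmulVl.
Qed.

Lemma gmul1r (a : H) : a * gone H = a.
Proof. rewrite <- (gmulVl H a), gmulA, gmulVr, gmul1l. reflexivity. Qed.

Lemma gcommV (a b : H) : a * b = b * a -> a^-1 * b = b * a^-1.
Proof.
  intro ab.
  rewrite <- (gmul1r (a^-1 * b)), <- (gmulVr a).
  rewrite (gmulA _ (a^-1 * b) a), <- (gmulA _ a^-1 b a), <- ab.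
  rewrite (gmulA _ a^-1 a b), gmulVl, gmul1l. reflexivity.
Qed.

Lemma gmul_twist_telescope (a b c d e : H) :
  (a * b * c^-1) * (c * d * e^-1) = a * (b * d) * e^-1.
Proof.
  rewrite !gmulA. f_equal.
  rewrite <- (gmulA _ _ c^-1 c), gmulVl, gmul1r, <- (gmulA _ a b d). reflexivity.
Qed.

Lemma gmul_twist_comm_l (a b c e : H) : a * c = c * a ->
  c * (a * b * e^-1) = a * (c * b) * e^-1.
Proof. intro ac. rewrite !gmulA, <- ac. reflexivity. Qed.

Lemma gmul_twist_comm_r (a b c h : H) : c * h = h * c ->
  (a * b * c^-1) * h = a * (b * h) * c^-1.
Proof. intro ch. apply gcommV in ch. rewrite <- !gmulA, ch. reflexivity. Qed.

End GroupFacts.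

Section BraidComponents.
Variable X : Type.

Lemma left_act_eq (sigma : X * X -> X * X) x y z :
  left_act sigma (x, y, z) = (c1 sigma x y, c2 sigma x y, z).
Proof. unfold left_act, c1, c2. destruct (sigma (x, y)). reflexivity. Qed.

Lemma right_act_eq (sigma : X * X -> X * X) x y z :
  right_act sigma (x, y, z) = (x, c1 sigma y z, c2 sigma y z).
Proof. unfold right_act, c1, c2. destruct (sigma (y, z)). reflexivity. Qed.

Section YangBaxter.
Variable S : X * X -> X * X.
Hypothesis braid : forall t,
  right_act S (left_act S (right_act S t)) = left_act S (right_act S (left_act S t)).

Lemma yang_baxter_c2c1 x y z :
  c1 S (c2 S x (c1 S y z)) (c2 S y z) = c2 S (c1 S x y) (c1 S (c2 S x y) z).
Proof.
  specialize (braid (x, y, z)). repeat rewrite ?right_act_eq, ?left_act_eq in braid.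
  injection braid. intros _ E _. exact E.
Qed.

Lemma yang_baxter_c2c2 x y z :
  c2 S (c2 S x (c1 S y z)) (c2 S y z) = c2 S (c2 S x y) z.
Proof.
  specialize (braid (x, y, z)). repeat rewrite ?right_act_eq, ?left_act_eq in braid.
  injection braid. intros E _ _. exact E.
Qed.

End YangBaxter.

Lemma mixed_braid_c2 (S beta : X * X -> X * X) :
  (forall t, right_act beta (left_act S (right_act beta t))
             = left_act beta (right_act S (left_act beta t))) ->
  forall x y z, c2 beta (c2 S x (c1 beta y z)) (c2 beta y z) = c2 S (c2 beta x y) z.
Proof.
  intros mixed x y z. specialize (mixed (x, y, z)).
  repeat rewrite ?right_act_eq, ?left_act_eq in mixed.
  injection mixed. intros E _ _. exact E.
Qed.

Section Involution.
Variable beta : X * X -> X * X.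
Hypothesis beta_invol : forall p, beta (beta p) = p.

Lemma involutive_c1 x y : c1 beta (c1 beta x y) (c2 beta x y) = x.
Proof. unfold c1, c2. rewrite <- surjective_pairing, beta_invol. reflexivity. Qed.

Lemma involutive_c2 x y : c2 beta (c1 beta x y) (c2 beta x y) = y.
Proof. unfold c1, c2. rewrite <- surjective_pairing, beta_invol. reflexivity. Qed.

End Involution.

Lemma s_map_c2 (S : X * X -> X * X) (s : X -> X) :
  is_s_map S s -> forall x, c2 S x (s x) = s x.
Proof. intros [_ fixed] x. unfold c2. rewrite (proj2 (fixed x (s x)) eq_refl). reflexivity. Qed.

End BraidComponents.

Section Twist.
Variables (X : Type) (S beta : X * X -> X * X) (s : X -> X) (H : Group).
Variables (f g ft : X -> X -> H) (lam : X -> H).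
Local Notation "a * b" := (gmul H a b).
Local Notation S1 := (c1 S).
Local Notation S2 := (c2 S).
Local Notation b1 := (c1 beta).
Local Notation b2 := (c2 beta).

Hypothesis ft_def : forall x y, ft x y = lam x * f x y * ginv H (lam (S2 x y)).
Hypothesis braid : forall t,
  right_act S (left_act S (right_act S t)) = left_act S (right_act S (left_act S t)).

Lemma twist_f1
    (f1 : forall x y z, f x y * f (S2 x y) z = f x (S1 y z) * f (S2 x (S1 y z)) (S2 y z)) :
  forall x y z, ft x y * ft (S2 x y) z = ft x (S1 y z) * ft (S2 x (S1 y z)) (S2 y z).
Proof.
  intros x y z. rewrite !ft_def, !gmul_twist_telescope, f1, yang_baxter_c2c2 by exact braid.
  reflexivity.
Qed.

Lemma twist_f2
    (lam_S1 : forall x y, lam y = lam (S1 x y))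
    (f2 : forall x y z, f (S1 x y) (S1 (S2 x y) z) = f y z) :
  forall x y z, ft (S1 x y) (S1 (S2 x y) z) = ft y z.
Proof.
  intros x y z. rewrite !ft_def, f2, <- lam_S1, <- yang_baxter_c2c1, <- lam_S1 by exact braid.
  reflexivity.
Qed.

Lemma twist_f3 (s_S : is_s_map S s) (lam_s : forall x, lam x = lam (s x))
    (f3 : forall x, f x (s x) = gone H) :
  forall x, ft x (s x) = gone H.
Proof. intro x. rewrite ft_def, f3, gmul1r, s_map_c2, <- lam_s by exact s_S. apply gmulVr. Qed.

Section Mixed.
Hypothesis beta_invol : forall p, beta (beta p) = p.
Hypothesis lam_b1 : forall x y, lam y = lam (b1 x y).

Lemma lam_b2 x y : lam (b2 x y) = lam x.
Proof. rewrite (lam_b1 (b1 x y)), involutive_c1 by exact beta_invol. reflexivity. Qed.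

Lemma twist_m3
    (mixed : forall t, right_act beta (left_act S (right_act beta t))
                       = left_act beta (right_act S (left_act beta t)))
    (lam_g : forall x y, lam x * g x y = g x y * lam x)
    (m3 : forall x y z,
       g x (b1 y z) * f (b2 x (b1 y z)) (b2 y z) = f x y * g (S2 x y) z) :
  forall x y z, g x (b1 y z) * ft (b2 x (b1 y z)) (b2 y z) = ft x y * g (S2 x y) z.
Proof.
  intros x y z.
  (* the mixed braid relation at (x, b1 y z, b2 y z), with b1 (b1 y z) (b2 y z) = y *)
  assert (lam_S2 : lam (S2 (b2 x (b1 y z)) (b2 y z)) = lam (S2 x y)).
  { rewrite <- (mixed_braid_c2 mixed), lam_b2, involutive_c1 by exact beta_invol.
    reflexivity. }
  rewrite !ft_def, lam_b2, lam_S2, gmul_twist_comm_l, gmul_twist_comm_r, m3 by apply lam_g.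
  reflexivity.
Qed.

End Mixed.
End Twist.

Theorem mainTheorem6 (X : Type) (S beta : X * X -> X * X) (s sb : X -> X)
  (H : Group) (f g ft : X -> X -> H) :
  is_virtual_pair S beta ->
  is_s_map S s -> is_s_map beta sb ->
  is_nc_cocycle_pair S beta s sb f g ->
  cohomologous S beta s f g ft g ->
  is_nc_cocycle_pair S beta s sb ft g.
Proof.
  intros [[_ [braid _]] [_ [beta_invol mixed]]] s_S _
    [f1 [f2 [f3 [g1 [g2 [g3 [g4 [g5 [m1 [m2 m3]]]]]]]]]]
    [_ [lam [lam_s [lam_S1 [lam_b1 [lam_g ft_def]]]]]].
  repeat split; try assumption.
  - exact (twist_f1 ft_def braid f1).
  - exact (twist_f2 ft_def braid lam_S1 f2).
  - exact (twist_f3 ft_def s_S lam_s f3).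
  - exact (twist_m3 ft_def beta_invol lam_b1 mixed lam_g m3).
Qed.
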